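(* Let $\Omega$ be a non-empty bounded open subset of $\mathbf{R}^2$ and let $\beta:\Omega\to\mathbf{R}$ be a $C^1$ function. Assume there exists a $C^1$ function $\alpha:\Omega\to\mathbf{R}$ such that $\alpha_x\beta_y-\alpha_y\beta_x$ vanishes at no point of $\Omega$. Then for any $u\in C^1(\Omega)\cap C^0(\overline{\Omega})$ satisfying $\beta_yu_x-\beta_xu_y=0$ in $\Omega$, one has $\sup_\Omega u=\sup_{\partial\Omega}u$ and $\inf_\Omega u=\inf_{\partial\Omega}u$. *)

From Stdlib Require Import Reals.
From Coquelicot Require Import Coquelicot.
Open Scope R_scope.

Definition dist2 (p q : R * R) : R :=
  sqrt ((fst p - fst q) ^ 2 + (snd p - snd q) ^ 2).

Definition is_open2 (O : R * R -> Prop) : Prop :=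
  forall p, O p -> exists eps, 0 < eps /\ forall q, dist2 p q < eps -> O q.

Definition bounded2 (O : R * R -> Prop) : Prop :=
  exists M, forall p, O p -> dist2 p (0, 0) <= M.

Definition nonempty2 (O : R * R -> Prop) : Prop := exists p, O p.

Definition closure2 (O : R * R -> Prop) (p : R * R) : Prop :=
  forall eps, 0 < eps -> exists q, O q /\ dist2 p q < eps.

Definition boundary2 (O : R * R -> Prop) (p : R * R) : Prop :=
  closure2 O p /\ ~ O p.

Definition cont2_at (f : R * R -> R) (p : R * R) : Prop :=
  forall eps, 0 < eps -> exists delta, 0 < delta /\
    forall q, dist2 p q < delta -> Rabs (f q - f p) < eps.

Definition cont2_on (A : R * R -> Prop) (f : R * R -> R) : Prop :=
  forall p, A p -> forall eps, 0 < eps -> exists delta, 0 < delta /\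
    forall q, A q -> dist2 p q < delta -> Rabs (f q - f p) < eps.

Definition dx (f : R * R -> R) (p : R * R) : R :=
  Derive (fun t => f (t, snd p)) (fst p).
Definition dy (f : R * R -> R) (p : R * R) : R :=
  Derive (fun t => f (fst p, t)) (snd p).

Definition C1_on (O : R * R -> Prop) (f : R * R -> R) : Prop :=
  forall p, O p ->
    ex_derive (fun t => f (t, snd p)) (fst p) /\
    ex_derive (fun t => f (fst p, t)) (snd p) /\
    cont2_at (dx f) p /\ cont2_at (dy f) p.

Definition image2 (A : R * R -> Prop) (u : R * R -> R) (r : R) : Prop :=
  exists p, A p /\ r = u p.

From Stdlib Require Import Reals.
From Coquelicot Require Import Coquelicot.
From Stdlib Require Import Lra List Classical ClassicalEpsilon.
Open Scope R_scope.

(* Suppose [u q0 > c] while [u < c] on the boundary.  The superlevel set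
   [K = {x in closure Omega | u x >= c}] is compact and contained in Omega.
   For small [eps > 0] the maximum of [u + eps * alpha] over [K] is still
   attained where [u > c], hence at a local maximum in Omega, where
   [grad u = - eps * grad alpha]; the transport equation then forces
   [alpha_x beta_y - alpha_y beta_x = 0] there.  The infimum is the supremum
   for [-u]. *)

Lemma dist2_fst_le p q : Rabs (fst p - fst q) <= dist2 p q.
Proof.
  rewrite <- sqrt_Rsqr_abs. apply sqrt_le_1_alt. unfold Rsqr. simpl.
  pose proof (Rle_0_sqr (snd p - snd q)). unfold Rsqr in *. nra.
Qed.

Lemma dist2_snd_le p q : Rabs (snd p - snd q) <= dist2 p q.
Proof.
  rewrite <- sqrt_Rsqr_abs. apply sqrt_le_1_alt. unfold Rsqr. simpl.
  pose proof (Rle_0_sqr (fst p - fst q)). unfold Rsqr in *. nra.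
Qed.

Lemma dist2_le_abs_add p q :
  dist2 p q <= Rabs (fst p - fst q) + Rabs (snd p - snd q).
Proof.
  pose proof (Rabs_pos (fst p - fst q)); pose proof (Rabs_pos (snd p - snd q)).
  unfold dist2. rewrite <- (sqrt_square (Rabs _ + Rabs _)) by lra.
  apply sqrt_le_1_alt.
  rewrite <- (pow2_abs (fst p - fst q)), <- (pow2_abs (snd p - snd q)). nra.
Qed.

Lemma dist2_diag p : dist2 p p = 0.
Proof.
  unfold dist2. rewrite !Rminus_diag. replace (0 ^ 2 + 0 ^ 2) with 0 by ring.
  apply sqrt_0.
Qed.

Lemma dist2_le_twice_add p q r : dist2 p r <= 2 * (dist2 p q + dist2 q r).
Proof.
  pose proof (Rabs_triang (fst p - fst q) (fst q - fst r)).
  pose proof (Rabs_triang (snd p - snd q) (snd q - snd r)).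
  replace (fst p - fst q + (fst q - fst r)) with (fst p - fst r) in * by ring.
  replace (snd p - snd q + (snd q - snd r)) with (snd p - snd r) in * by ring.
  pose proof (dist2_le_abs_add p r).
  pose proof (dist2_fst_le p q); pose proof (dist2_snd_le p q).
  pose proof (dist2_fst_le q r); pose proof (dist2_snd_le q r).
  lra.
Qed.

Lemma dist2_horizontal_le p q t :
  Rmin (fst p) (fst q) <= t <= Rmax (fst p) (fst q) ->
  dist2 p (t, snd q) <= dist2 p q.
Proof.
  intros Ht. unfold dist2. apply sqrt_le_1_alt. simpl.
  unfold Rmin, Rmax in Ht. destruct (Rle_dec (fst p) (fst q)); nra.
Qed.

Lemma bounded2_box K :
  bounded2 K -> exists M, forall p, K p -> Rabs (fst p) <= M /\ Rabs (snd p) <= M.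
Proof.
  intros [M HM]. exists M. intros p Kp.
  pose proof (dist2_fst_le p (0, 0)); pose proof (dist2_snd_le p (0, 0)).
  specialize (HM p Kp). simpl in *. rewrite !Rminus_0_r in *. lra.
Qed.

Lemma bounded2_incl (K L : R * R -> Prop) :
  bounded2 L -> (forall p, K p -> L p) -> bounded2 K.
Proof. intros [M HM] HKL. exists M. auto. Qed.

Definition closed2 (K : R * R -> Prop) : Prop :=
  forall z, ~ K z -> exists d, 0 < d /\ forall q, K q -> d <= dist2 z q.

Lemma box_finite_subcover (M : R) (delta : R * R -> posreal) :
  exists l : list (R * R), forall q, Rabs (fst q) <= M -> Rabs (snd q) <= M ->
    exists t, In t l /\ dist2 t q < delta t.
Proof.
  set (tp := fun z : Compactness.Tn 2 R => (fst z, fst (snd z))).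
  apply NNPP; intro Hno.
  apply (compactness_list 2 (-M, (-M, tt)) (M, (M, tt))
           (fun z => pos_div_2 (delta (tp z)))).
  intros [l Hl]. apply Hno. exists (map tp l).
  intros [q1 q2] H1 H2. simpl in H1, H2.
  apply Rabs_le_between in H1; apply Rabs_le_between in H2.
  destruct (Hl (q1, (q2, tt))) as [[t1 [t2 []]] [Ht [_ [C1 [C2 _]]]]];
    [simpl; tauto|].
  exists (t1, t2). split; [exact (in_map tp _ _ Ht)|].
  eapply Rle_lt_trans; [apply dist2_le_abs_add|]. unfold tp in *. simpl in *.
  rewrite Rabs_minus_sym in C1, C2. lra.
Qed.

Lemma In_argmax {A : Type} (P : A -> Prop) (g : A -> R) (l : list A) :
  (exists t, In t l /\ P t) ->
  exists t, In t l /\ P t /\ forall t', In t' l -> P t' -> g t' <= g t.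
Proof.
  induction l as [|a l IH]; intros [t [Ht Pt]]; [destruct Ht|].
  destruct (classic (exists t, In t l /\ P t)) as [Hl|Hl].
  - destruct (IH Hl) as [m [Hm [Pm Hmax]]].
    destruct (classic (P a /\ g m < g a)) as [[Pa Ham]|Ham].
    + exists a. split; [left; reflexivity|split; [exact Pa|]].
      intros t' [<-|Ht'] Pt'; [lra|]. specialize (Hmax t' Ht' Pt'). lra.
    + exists m. split; [right; exact Hm|split; [exact Pm|]].
      intros t' [<-|Ht'] Pt'; [|auto]. apply Rnot_lt_le. intro. tauto.
  - destruct Ht as [<-|Ht]; [|exfalso; eauto].
    exists a. split; [left; reflexivity|split; [exact Pt|]].
    intros t' [<-|Ht'] Pt'; [lra|exfalso; eauto].
Qed.

(* The gauge at a point outside [K] is a ball missing [K], so every center of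
   the finite subcover that is actually used lies in [K]. *)
Lemma dominated_of_locally_dominated (K : R * R -> Prop) (f : R * R -> R) :
  bounded2 K -> closed2 K -> (exists p, K p) ->
  (forall z, K z -> exists w d, K w /\ 0 < d /\
     forall q, K q -> dist2 z q < d -> f q < f w) ->
  exists w, K w /\ forall q, K q -> f q < f w.
Proof.
  intros HK Hcl [p0 Kp0] Hloc.
  destruct (bounded2_box K HK) as [M HM].
  assert (Hgauge : forall z, exists wd : (R * R) * posreal,
    (K z -> K (fst wd) /\ forall q, K q -> dist2 z q < snd wd -> f q < f (fst wd)) /\
    (~ K z -> forall q, K q -> snd wd <= dist2 z q)).
  { intros z. destruct (classic (K z)) as [Kz|Kz].
    - destruct (Hloc z Kz) as [w [d [Kw [Hd Hw]]]].
      exists (w, mkposreal d Hd). simpl. tauto.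
    - destruct (Hcl z Kz) as [d [Hd Hz]].
      exists (z, mkposreal d Hd). simpl. tauto. }
  destruct (choice _ Hgauge) as [wd Hwd].
  destruct (box_finite_subcover M (fun z => snd (wd z))) as [l Hl].
  assert (Hcov : forall q, K q -> exists t, In t l /\ K t /\ f q < f (fst (wd t))).
  { intros q Kq. destruct (HM q Kq) as [H1 H2].
    destruct (Hl q H1 H2) as [t [Ht Htq]].
    destruct (Hwd t) as [Hin Hout].
    destruct (classic (K t)) as [Kt|Kt].
    - exists t. split; [exact Ht|split; [exact Kt|]]. apply (Hin Kt); auto.
    - specialize (Hout Kt q Kq). lra. }
  destruct (In_argmax K (fun t => f (fst (wd t))) l) as [m [Hm [Km Hmax]]].
  { destruct (Hcov p0 Kp0) as [t [Ht [Kt _]]]. eauto. }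
  exists (fst (wd m)). split; [apply (Hwd m); exact Km|].
  intros q Kq. destruct (Hcov q Kq) as [t [Ht [Kt Hq]]].
  specialize (Hmax t Ht Kt). lra.
Qed.

Lemma cont2_on_attains_max (K : R * R -> Prop) (f : R * R -> R) :
  bounded2 K -> closed2 K -> (exists p, K p) -> cont2_on K f ->
  exists p, K p /\ forall q, K q -> f q <= f p.
Proof.
  intros HK Hcl Hne Hf. apply NNPP; intro Hno.
  assert (Hup : forall z, K z -> exists w, K w /\ f z < f w).
  { intros z Kz. apply NNPP; intro Hz. apply Hno. exists z. split; [exact Kz|].
    intros q Kq. apply Rnot_lt_le; intro Hq. eauto. }
  destruct (dominated_of_locally_dominated K f HK Hcl Hne) as [w [Kw Hw]].
  - intros z Kz. destruct (Hup z Kz) as [w [Kw Hzw]].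
    destruct (Hf z Kz (f w - f z)) as [d [Hd Hnear]]; [lra|].
    exists w, d. split; [exact Kw|split; [exact Hd|]]. intros q Kq Hq.
    specialize (Hnear q Kq Hq). apply Rabs_def2 in Hnear. lra.
  - specialize (Hw w Kw). lra.
Qed.

Lemma ex_derive_cont_at (g : R -> R) x :
  ex_derive g x -> forall e, 0 < e ->
  exists d, 0 < d /\ forall y, Rabs (y - x) < d -> Rabs (g y - g x) < e.
Proof.
  intros Hg e He.
  destruct (derivable_continuous_pt _ _ (ex_derive_Reals_0 _ _ Hg) e He)
    as [d [Hd Hnear]].
  exists d. split; [exact Hd|]. intros y Hy.
  destruct (Req_dec y x) as [->|Hyx].
  - rewrite Rminus_diag, Rabs_R0. exact He.
  - apply (Hnear y). split; [split; [exact I|auto]|exact Hy].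
Qed.

Lemma abs_sub_le_of_derive_bound (g g' : R -> R) a b B :
  (forall t, Rmin a b <= t <= Rmax a b -> is_derive g t (g' t) /\ Rabs (g' t) <= B) ->
  Rabs (g b - g a) <= B * Rabs (b - a).
Proof.
  intros Hg. destruct (MVT_abs g g' a b) as [c [Hc Hcab]].
  { intros c Hc. apply is_derive_Reals, (Hg c Hc). }
  rewrite Hc. apply Rmult_le_compat_r; [apply Rabs_pos|apply (Hg c Hcab)].
Qed.

(* Along the horizontal segment the slope is bounded by continuity of [dx f];
   the vertical increment is controlled by continuity of the vertical slice. *)
Lemma C1_on_cont2_at (O : R * R -> Prop) (f : R * R -> R) p :
  is_open2 O -> C1_on O f -> O p -> cont2_at f p.
Proof.
  intros HO Hf Op e He.
  destruct (HO p Op) as [r [Hr Hball]].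
  destruct (Hf p Op) as [_ [Hvert [Hdx _]]].
  destruct (Hdx 1 Rlt_0_1) as [d1 [Hd1 Hslope]].
  set (B := Rabs (dx f p) + 1).
  assert (HB : 0 < B) by (pose proof (Rabs_pos (dx f p)); unfold B; lra).
  destruct (ex_derive_cont_at _ _ Hvert (e / 2)) as [d2 [Hd2 Hvert2]]; [lra|].
  assert (HeB : 0 < e / (2 * B)) by (apply Rdiv_lt_0_compat; lra).
  exists (Rmin (Rmin r d1) (Rmin d2 (e / (2 * B)))).
  split; [repeat apply Rmin_pos; lra|]. intros q Hq.
  pose proof (Rmin_l (Rmin r d1) (Rmin d2 (e / (2 * B)))).
  pose proof (Rmin_r (Rmin r d1) (Rmin d2 (e / (2 * B)))).
  pose proof (Rmin_l r d1); pose proof (Rmin_r r d1).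
  pose proof (Rmin_l d2 (e / (2 * B))); pose proof (Rmin_r d2 (e / (2 * B))).
  assert (Hhor : Rabs (f (fst q, snd q) - f (fst p, snd q)) <= B * Rabs (fst q - fst p)).
  { apply (abs_sub_le_of_derive_bound (fun t => f (t, snd q)) (fun t => dx f (t, snd q))).
    intros t Ht. pose proof (dist2_horizontal_le p q t Ht).
    assert (Ot : O (t, snd q)) by (apply Hball; lra).
    split.
    - apply Derive_correct. exact (proj1 (Hf _ Ot)).
    - specialize (Hslope (t, snd q) ltac:(lra)).
      pose proof (Rabs_triang_inv (dx f (t, snd q)) (dx f p)). unfold B. lra. }
  assert (Hver : Rabs (f (fst p, snd q) - f (fst p, snd p)) < e / 2).
  { apply Hvert2. rewrite Rabs_minus_sym. pose proof (dist2_snd_le p q). lra. }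
  assert (HBq : B * Rabs (fst q - fst p) <= e / 2).
  { rewrite Rabs_minus_sym.
    apply Rle_trans with (B * (e / (2 * B))); [|right; field; lra].
    apply Rmult_le_compat_l; [lra|]. pose proof (dist2_fst_le p q). lra. }
  destruct p as [p1 p2], q as [q1 q2]. simpl in *.
  replace (f (q1, q2) - f (p1, p2))
    with ((f (q1, q2) - f (p1, q2)) + (f (p1, q2) - f (p1, p2))) by ring.
  eapply Rle_lt_trans; [apply Rabs_triang|]. lra.
Qed.

Lemma is_derive_local_max (g : R -> R) x l d :
  is_derive g x l -> 0 < d -> (forall t, Rabs (t - x) < d -> g t <= g x) -> l = 0.
Proof.
  intros Hg Hd Hmax. apply is_derive_Reals in Hg.
  change (derive_pt g x (exist _ l Hg) = 0).
  apply (deriv_maximum g (x - d) (x + d)); try lra.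
  intros t H1 H2. apply Hmax. apply Rabs_def1; lra.
Qed.

Definition local_max2 (g : R * R -> R) (p : R * R) : Prop :=
  exists d, 0 < d /\ forall q, dist2 p q < d -> g q <= g p.

Lemma local_max2_dx_eq0 g p :
  ex_derive (fun t => g (t, snd p)) (fst p) -> local_max2 g p -> dx g p = 0.
Proof.
  intros Hg [d [Hd Hmax]]. destruct p as [p1 p2].
  apply (is_derive_local_max (fun t => g (t, p2)) p1 _ d (Derive_correct _ _ Hg) Hd).
  intros t Ht. apply (Hmax (t, p2)).
  eapply Rle_lt_trans; [apply dist2_le_abs_add|]. simpl.
  rewrite Rminus_diag, Rabs_R0, Rabs_minus_sym. lra.
Qed.

Lemma local_max2_dy_eq0 g p :
  ex_derive (fun t => g (fst p, t)) (snd p) -> local_max2 g p -> dy g p = 0.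
Proof.
  intros Hg [d [Hd Hmax]]. destruct p as [p1 p2].
  apply (is_derive_local_max (fun t => g (p1, t)) p2 _ d (Derive_correct _ _ Hg) Hd).
  intros t Ht. apply (Hmax (p1, t)).
  eapply Rle_lt_trans; [apply dist2_le_abs_add|]. simpl.
  rewrite Rminus_diag, Rabs_R0, Rabs_minus_sym. lra.
Qed.

Definition transport_sol (beta u : R * R -> R) (p : R * R) : Prop :=
  ex_derive (fun t => u (t, snd p)) (fst p) /\
  ex_derive (fun t => u (fst p, t)) (snd p) /\
  dy beta p * dx u p - dx beta p * dy u p = 0.

Lemma transport_sol_opp beta u p :
  transport_sol beta u p -> transport_sol beta (fun q => - u q) p.
Proof.
  intros [Hux [Huy Hpde]].
  split; [apply (ex_derive_opp (fun t => u (t, snd p))); exact Hux|].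
  split; [apply (ex_derive_opp (fun t => u (fst p, t))); exact Huy|].
  unfold dx, dy in *. rewrite !Derive_opp, <- Ropp_0, <- Hpde. ring.
Qed.

Lemma transport_sol_no_local_max beta alpha u p eps :
  eps <> 0 ->
  ex_derive (fun t => alpha (t, snd p)) (fst p) ->
  ex_derive (fun t => alpha (fst p, t)) (snd p) ->
  dx alpha p * dy beta p - dy alpha p * dx beta p <> 0 ->
  transport_sol beta u p ->
  ~ local_max2 (fun q => u q + eps * alpha q) p.
Proof.
  intros Heps Hax Hay Hjac [Hux [Huy Hpde]] Hmax.
  assert (Hx : dx u p = - (eps * dx alpha p)).
  { pose proof (local_max2_dx_eq0 _ _
      (ex_derive_plus _ _ _ Hux (ex_derive_scal _ eps _ Hax)) Hmax) as H.
    unfold dx in *. rewrite Derive_plus, Derive_scal in H; auto.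
    - lra.
    - apply ex_derive_scal. exact Hax. }
  assert (Hy : dy u p = - (eps * dy alpha p)).
  { pose proof (local_max2_dy_eq0 _ _
      (ex_derive_plus _ _ _ Huy (ex_derive_scal _ eps _ Hay)) Hmax) as H.
    unfold dy in *. rewrite Derive_plus, Derive_scal in H; auto.
    - lra.
    - apply ex_derive_scal. exact Hay. }
  assert (Hzero : eps * (dx alpha p * dy beta p - dy alpha p * dx beta p) = 0).
  { rewrite <- Ropp_0, <- Hpde, Hx, Hy. ring. }
  apply Rmult_integral in Hzero. tauto.
Qed.

Lemma closure2_incl (O : R * R -> Prop) p : O p -> closure2 O p.
Proof. intros Op e He. exists p. rewrite dist2_diag. auto. Qed.

Lemma closure2_closed (O : R * R -> Prop) : closed2 (closure2 O).
Proof.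
  intros z Hz. apply not_all_ex_not in Hz as [e He].
  apply imply_to_and in He as [He Hfar].
  exists (e / 4). split; [lra|]. intros q Cq. apply Rnot_lt_le; intro Hzq.
  destruct (Cq (e / 4)) as [r [Or Hqr]]; [lra|].
  apply Hfar. exists r. split; [exact Or|].
  pose proof (dist2_le_twice_add z q r). lra.
Qed.

Lemma bounded2_closure2 (O : R * R -> Prop) : bounded2 O -> bounded2 (closure2 O).
Proof.
  intros [M HM]. exists (2 * (1 + M)). intros p Cp.
  destruct (Cp 1 Rlt_0_1) as [r [Or Hpr]]. specialize (HM r Or).
  pose proof (dist2_le_twice_add p r (0, 0)). lra.
Qed.

Lemma closed2_superlevel (K : R * R -> Prop) (u : R * R -> R) c :
  closed2 K -> cont2_on K u -> closed2 (fun p => K p /\ c <= u p).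
Proof.
  intros Hcl Hu z Hz. destruct (classic (K z)) as [Kz|Kz].
  - assert (Huz : u z < c) by (apply Rnot_le_lt; intro; apply Hz; auto).
    destruct (Hu z Kz (c - u z)) as [d [Hd Hnear]]; [lra|].
    exists d. split; [exact Hd|]. intros q [Kq Hq]. apply Rnot_lt_le; intro Hzq.
    specialize (Hnear q Kq Hzq). apply Rabs_def2 in Hnear. lra.
  - destruct (Hcl z Kz) as [d [Hd Hfar]].
    exists d. split; [exact Hd|]. intros q [Kq _]. auto.
Qed.

Lemma cont2_on_incl (K L : R * R -> Prop) (f : R * R -> R) :
  cont2_on L f -> (forall p, K p -> L p) -> cont2_on K f.
Proof.
  intros Hf HKL p Kp e He. destruct (Hf p (HKL p Kp) e He) as [d [Hd Hnear]].
  exists d. split; [exact Hd|]. auto.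
Qed.

Lemma cont2_on_of_at (K : R * R -> Prop) (f : R * R -> R) :
  (forall p, K p -> cont2_at f p) -> cont2_on K f.
Proof.
  intros Hf p Kp e He. destruct (Hf p Kp e He) as [d [Hd Hnear]].
  exists d. split; [exact Hd|]. auto.
Qed.

Lemma cont2_on_plus_scal (K : R * R -> Prop) (f g : R * R -> R) k :
  cont2_on K f -> cont2_on K g -> cont2_on K (fun p => f p + k * g p).
Proof.
  intros Hf Hg p Kp e He.
  set (e' := e / (2 * (Rabs k + 1))).
  assert (Hk : 0 < Rabs k + 1) by (pose proof (Rabs_pos k); lra).
  assert (He' : 0 < e') by (apply Rdiv_lt_0_compat; lra).
  destruct (Hf p Kp (e / 2)) as [d1 [Hd1 Hnear1]]; [lra|].
  destruct (Hg p Kp e') as [d2 [Hd2 Hnear2]]; [exact He'|].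
  exists (Rmin d1 d2). split; [apply Rmin_pos; auto|]. intros q Kq Hq.
  specialize (Hnear1 q Kq (Rlt_le_trans _ _ _ Hq (Rmin_l d1 d2))).
  specialize (Hnear2 q Kq (Rlt_le_trans _ _ _ Hq (Rmin_r d1 d2))).
  replace (f q + k * g q - (f p + k * g p)) with ((f q - f p) + k * (g q - g p)) by ring.
  eapply Rle_lt_trans; [apply Rabs_triang|]. rewrite Rabs_mult.
  assert (Rabs k * Rabs (g q - g p) <= (Rabs k + 1) * e').
  { apply Rmult_le_compat; try apply Rabs_pos; lra. }
  replace ((Rabs k + 1) * e') with (e / 2) in * by (unfold e'; field; lra).
  lra.
Qed.

Lemma cont2_on_opp (K : R * R -> Prop) (f : R * R -> R) :
  cont2_on K f -> cont2_on K (fun p => - f p).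
Proof.
  intros Hf p Kp e He. destruct (Hf p Kp e He) as [d [Hd Hnear]].
  exists d. split; [exact Hd|]. intros q Kq Hq.
  replace (- f q - - f p) with (- (f q - f p)) by ring. rewrite Rabs_Ropp. auto.
Qed.

Lemma local_max2_of_superlevel_max (O : R * R -> Prop) (u g : R * R -> R) c p :
  is_open2 O -> cont2_on (closure2 O) u -> O p -> c < u p ->
  (forall q, closure2 O q -> c <= u q -> g q <= g p) -> local_max2 g p.
Proof.
  intros HO Hu Op Hp Hmax.
  destruct (HO p Op) as [r [Hr Hball]].
  destruct (Hu p (closure2_incl O p Op) (u p - c)) as [d [Hd Hnear]]; [lra|].
  exists (Rmin r d). split; [apply Rmin_pos; auto|]. intros q Hq.
  assert (Cq : closure2 O q).
  { apply closure2_incl, Hball. exact (Rlt_le_trans _ _ _ Hq (Rmin_l r d)). }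
  apply (Hmax q Cq).
  specialize (Hnear q Cq (Rlt_le_trans _ _ _ Hq (Rmin_r r d))).
  apply Rabs_def2 in Hnear. lra.
Qed.

(* [eps] is small enough that [eps * alpha] varies by less than [u q0 - c] on
   the superlevel set, so the maximum of [u + eps * alpha] stays above [c]. *)
Lemma perturbed_weak_max_principle (O : R * R -> Prop) (u alpha : R * R -> R) :
  bounded2 O -> is_open2 O -> (forall p, O p -> cont2_at alpha p) ->
  cont2_on (closure2 O) u ->
  (forall eps p, 0 < eps -> O p -> ~ local_max2 (fun q => u q + eps * alpha q) p) ->
  forall q0 c, O q0 -> (forall b, boundary2 O b -> u b < c) -> u q0 <= c.
Proof.
  intros HB HO Halpha Hu Hnomax q0 c Oq0 Hbd. apply Rnot_lt_le; intro Hq0.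
  set (K := fun p => closure2 O p /\ c <= u p).
  assert (KO : forall p, K p -> O p).
  { intros p [Cp Hp]. apply NNPP; intro Np. specialize (Hbd p (conj Cp Np)). lra. }
  assert (HKb : bounded2 K).
  { apply (bounded2_incl K (closure2 O)); [apply bounded2_closure2; exact HB|].
    intros p [Cp _]. exact Cp. }
  assert (HKc : closed2 K).
  { apply closed2_superlevel; [apply closure2_closed|exact Hu]. }
  assert (Kq0 : K q0) by (split; [apply closure2_incl; exact Oq0|lra]).
  assert (HuK : cont2_on K u).
  { apply (cont2_on_incl K (closure2 O) u Hu). intros p [Cp _]. exact Cp. }
  assert (HaK : cont2_on K alpha) by (apply cont2_on_of_at; auto).
  destruct (cont2_on_attains_max K alpha HKb HKc (ex_intro _ q0 Kq0) HaK) as [a [Ka Ha]].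
  pose proof (Ha q0 Kq0) as Hspread.
  set (eps := (u q0 - c) / (2 * (alpha a - alpha q0 + 1))).
  assert (Heps : 0 < eps) by (apply Rdiv_lt_0_compat; lra).
  assert (Hepsb : eps * (alpha a - alpha q0) < u q0 - c).
  { assert (eps * (alpha a - alpha q0 + 1) = (u q0 - c) / 2) by (unfold eps; field; lra).
    lra. }
  destruct (cont2_on_attains_max K (fun q => u q + eps * alpha q) HKb HKc
              (ex_intro _ q0 Kq0) (cont2_on_plus_scal K u alpha eps HuK HaK))
    as [p [Kp Hp]].
  assert (Hcp : c < u p).
  { specialize (Hp q0 Kq0).
    assert (eps * alpha p <= eps * alpha a) by (apply Rmult_le_compat_l; [lra|auto]).
    lra. }
  apply (Hnomax eps p Heps (KO p Kp)).
  apply (local_max2_of_superlevel_max O u _ c p HO Hu (KO p Kp) Hcp).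
  intros q Cq Hq. apply Hp. split; assumption.
Qed.

Lemma Lub_Rbar_le_of_strict_ub (E F : R -> Prop) :
  (forall c, (forall y, F y -> y < c) -> forall x, E x -> x <= c) ->
  Rbar_le (Lub_Rbar E) (Lub_Rbar F).
Proof.
  intros H. apply (proj2 (Lub_Rbar_correct E)). intros x Ex.
  destruct (Lub_Rbar_correct F) as [HF _].
  destruct (Lub_Rbar F) as [L| |]; simpl; auto.
  - apply Rnot_lt_le; intro Hx.
    assert (x <= (L + x) / 2); [|lra].
    apply (H ((L + x) / 2)); [|exact Ex].
    intros y Fy. specialize (HF y Fy). simpl in HF. lra.
  - assert (x <= x - 1); [|lra].
    apply H; [|exact Ex]. intros y Fy. exact (False_ind _ (HF y Fy)).
Qed.

Lemma Lub_Rbar_le_of_approx (E F : R -> Prop) :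
  (forall y, F y -> forall e, 0 < e -> exists x, E x /\ y - e < x) ->
  Rbar_le (Lub_Rbar F) (Lub_Rbar E).
Proof.
  intros H. apply (proj2 (Lub_Rbar_correct F)). intros y Fy.
  destruct (Lub_Rbar_correct E) as [HE _].
  destruct (Lub_Rbar E) as [L| |]; simpl; auto.
  - apply Rnot_lt_le; intro Hy.
    destruct (H y Fy (y - L)) as [x [Ex Hx]]; [lra|].
    specialize (HE x Ex). simpl in HE. lra.
  - destruct (H y Fy 1 Rlt_0_1) as [x [Ex _]]. exact (HE x Ex).
Qed.

Lemma boundary2_approx (O : R * R -> Prop) (u : R * R -> R) b e :
  cont2_on (closure2 O) u -> boundary2 O b -> 0 < e -> exists q, O q /\ u b - e < u q.
Proof.
  intros Hu [Cb _] He. destruct (Hu b Cb e He) as [d [Hd Hnear]].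
  destruct (Cb d Hd) as [q [Oq Hbq]]. exists q. split; [exact Oq|].
  specialize (Hnear q (closure2_incl O q Oq) Hbq). apply Rabs_def2 in Hnear. lra.
Qed.

Lemma Lub_Rbar_image2_boundary (O : R * R -> Prop) (u : R * R -> R) :
  cont2_on (closure2 O) u ->
  (forall q0 c, O q0 -> (forall b, boundary2 O b -> u b < c) -> u q0 <= c) ->
  Lub_Rbar (image2 O u) = Lub_Rbar (image2 (boundary2 O) u).
Proof.
  intros Hu Hmax. apply Rbar_le_antisym.
  - apply Lub_Rbar_le_of_strict_ub. intros c Hc x [q [Oq ->]].
    apply (Hmax q c Oq). intros b Bb. apply Hc. exists b. auto.
  - apply Lub_Rbar_le_of_approx. intros y [b [Bb ->]] e He.
    destruct (boundary2_approx O u b e Hu Bb He) as [q [Oq Hq]].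
    exists (u q). split; [exists q; auto|exact Hq].
Qed.

Lemma Glb_Rbar_image2_opp (A : R * R -> Prop) (u : R * R -> R) :
  Glb_Rbar (image2 A u) = Rbar_opp (Lub_Rbar (image2 A (fun p => - u p))).
Proof.
  apply is_glb_Rbar_unique.
  apply (is_glb_Rbar_eqset (fun x => image2 A (fun p => - u p) (- x))).
  - intros x. split; intros [p [Ap Hp]]; exists p; split; auto; lra.
  - apply is_glb_Rbar_opp, Lub_Rbar_correct.
Qed.

Lemma Lub_Rbar_image2_transport_sol (O : R * R -> Prop) (beta alpha u : R * R -> R) :
  bounded2 O -> is_open2 O -> C1_on O alpha ->
  (forall p, O p -> dx alpha p * dy beta p - dy alpha p * dx beta p <> 0) ->
  (forall p, O p -> transport_sol beta u p) -> cont2_on (closure2 O) u ->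
  Lub_Rbar (image2 O u) = Lub_Rbar (image2 (boundary2 O) u).
Proof.
  intros HB HO Ha Hjac Hsol Hu. apply (Lub_Rbar_image2_boundary O u Hu).
  apply (perturbed_weak_max_principle O u alpha HB HO); [|exact Hu|].
  - intros p Op. exact (C1_on_cont2_at O alpha p HO Ha Op).
  - intros eps p Heps Op. destruct (Ha p Op) as [Hax [Hay _]].
    apply (transport_sol_no_local_max beta); auto. lra.
Qed.

Theorem theorem6 (Omega : R * R -> Prop) (beta : R * R -> R) :
  nonempty2 Omega -> bounded2 Omega -> is_open2 Omega ->
  C1_on Omega beta ->
  (exists alpha : R * R -> R, C1_on Omega alpha /\
     forall p, Omega p -> dx alpha p * dy beta p - dy alpha p * dx beta p <> 0) ->
  forall u : R * R -> R,
    C1_on Omega u -> cont2_on (closure2 Omega) u ->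
    (forall p, Omega p -> dy beta p * dx u p - dx beta p * dy u p = 0) ->
    Lub_Rbar (image2 Omega u) = Lub_Rbar (image2 (boundary2 Omega) u) /\
    Glb_Rbar (image2 Omega u) = Glb_Rbar (image2 (boundary2 Omega) u).
Proof.
  intros _ HB HO _ [alpha [Ha Hjac]] u Hu Hcont Hpde.
  assert (Hsol : forall p, Omega p -> transport_sol beta u p).
  { intros p Op. destruct (Hu p Op) as [Hux [Huy _]]. repeat split; auto. }
  split.
  - exact (Lub_Rbar_image2_transport_sol Omega beta alpha u HB HO Ha Hjac Hsol Hcont).
  - rewrite !Glb_Rbar_image2_opp. f_equal.
    apply (Lub_Rbar_image2_transport_sol Omega beta alpha); auto.
    + intros p Op. apply transport_sol_opp. auto.
    + apply cont2_on_opp. exact Hcont.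
Qed.
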